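(* There is an absolute constant $c$ such that the following holds. Let $q\ge1$, $M>0$, $\alpha=2^{q+1}+8$, and let $\{J_i\}_{i=1}^m$ be an assignment satisfying $$\sum_{i=1}^m\Big(\sum_{j\in J_i}\mathbb{E}[X'_{ij}]\Big)^q\le 2^{q+2}M^q\qquad\text{and}\qquad\sum_{i=1}^m\sum_{j\in J_i}\mathbb{E}[(X'_{ij})^q]\le 3\alpha M^q.$$ Then $\mathbb{E}\Big[\big(\sum_{i=1}^m(\sum_{j\in J_i}X'_{ij})^q\big)^{1/q}\Big]\le c\cdot\frac{q}{\ln(q+1)}\cdot M$.
   Context: Nonnegative random variables $X_{ij}$ (size of job $j$ on machine $i$), with $X_{ij}$ and $X_{i'j'}$ independent whenever $j\ne j'$. Truncated part relative to $M$: $X'_{ij}:=X_{ij}\mathbf{1}[X_{ij}\le M]$. An assignment is a partition $\{J_i\}_{i=1}^m$ of $[n]$. *)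

From HB Require Import structures.
From mathcomp Require Import all_boot all_order all_algebra.
From mathcomp Require Import all_classical all_reals all_analysis.
Set Implicit Arguments. Unset Strict Implicit. Unset Printing Implicit Defensive.
Import Order.TTheory GRing.Theory Num.Theory.
Local Open Scope ring_scope.
Local Open Scope classical_set_scope.

Definition trunc (R : realType) (M x : R) : R := if x <= M then x else 0.

(* Independence across jobs: the random vectors (X i j)_i, for j ranging over
   the jobs, are mutually independent (product rule on all rectangles;
   taking B i j = setT for the jobs outside a subfamily gives the product rule
   for every subfamily of jobs). *)
Definition jobs_independent (R : realType) d (T : measurableType d)
  (P : probability T R) (m n : nat) (X : 'I_m -> 'I_n -> T -> R) : Prop :=
  forall B : 'I_m -> 'I_n -> set R,
    (forall i j, measurable (B i j)) ->
    P (\bigcap_(j in [set: 'I_n]) \bigcap_(i in [set: 'I_m]) (X i j @^-1` B i j))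
    = (\prod_(j < n) P (\bigcap_(i in [set: 'I_m]) (X i j @^-1` B i j)))%E.

From HB Require Import structures.
From mathcomp Require Import all_boot all_order all_algebra.
From mathcomp Require Import all_classical all_reals all_analysis.
From mathcomp Require Import measurable_realfun.
From mathcomp.algebra_tactics Require Import ring lra.
Import Order.TTheory GRing.Theory Num.Theory.
Set Implicit Arguments. Unset Strict Implicit. Unset Printing Implicit Defensive.
Local Open Scope ring_scope.
Local Open Scope classical_set_scope.

(* Fix a machine i and a scale t > 0.  With x_j = X'_ij / t, the load satisfies
   (load / t)^q <= (1 + sum_j x_j)^q <= prod_j (1 + x_j)^q, and independence
   across jobs factorizes the expectation of the product.  The elementary bound
   (1 + x)^q <= 1 + q sqrt(q+1) x + ((2K + 1) x)^q, with K = q / ln(q+1), then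
   bounds E[load^q] by t^q exp(sum_j q sqrt(q+1) E x_j + (2K+1)^q E x_j^q).
   Taking t = sqrt(q+1) E[load] + (2K+1) (sum_j E X'_ij^q)^(1/q) + slack makes
   the exponent at most 3q, and (a + b + c)^q <= 3^q (a^q + b^q + c^q) bounds
   t^q by the moments of the machine.  Summing over the machines with the two
   hypotheses gives E[sum_i load_i^q] <= (630 e^3 K M)^q, and
   y^(1/q) <= Z (1 + y / Z^q) turns this into the claimed bound.
   Independence is only assumed on rectangles, so each factor (1 + x_j)^q is
   first rounded up to a simple function on a grid of mesh t/(n+1); the
   rounding costs at most a factor e^q. *)

Section RealInequalities.
Variable R : realType.
Implicit Types x y q : R.

Lemma ler_wpowR x y q : 0 <= x -> x <= y -> 0 <= q -> x `^ q <= y `^ q.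
Proof.
move=> x0 xy q0; apply: (ge0_ler_powR q0); rewrite ?nnegrE //.
exact: le_trans xy.
Qed.

Lemma expR_le1DmulexpR y : 0 <= y -> expR y <= 1 + y * expR y.
Proof.
move=> y0; have ey := expR_gt0 y; have h := expR_ge1Dx (- y).
have : expR y * (1 - y) <= expR y * expR (- y) by rewrite ler_pM2l //; lra.
rewrite expRxMexpNx_1; nra.
Qed.

Lemma ln1D_gt0 q : 0 < q -> 0 < ln (q + 1).
Proof. by move=> q0; apply: ln_gt0; lra. Qed.

Lemma ln_sqrt x : 0 < x -> ln (Num.sqrt x) = ln x / 2.
Proof. by move=> x0; rewrite -powR12_sqrt ?ln_powR 1?mulrC //; lra. Qed.

Lemma sqrtD1_ge1 q : 0 <= q -> 1 <= Num.sqrt (q + 1).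
Proof. by move=> q0; rewrite -[leLHS]sqrtr1 ler_sqrt; lra. Qed.

Definition qlog q := q / ln (q + 1).

Lemma qlog_ge1 q : 1 <= q -> 1 <= qlog q.
Proof.
move=> q1; rewrite /qlog ler_pdivlMr ?ln1D_gt0 // 1?mul1r; last lra.
by rewrite addrC; apply: le_ln1Dx; lra.
Qed.

Lemma sqrt_le_qlog q : 1 <= q -> Num.sqrt (q + 1) <= 2 * qlog q.
Proof.
move=> q1; have l0 := ln1D_gt0 (lt_le_trans ltr01 q1).
set r := Num.sqrt (q + 1).
have r2 : r * r = q + 1 by rewrite -expr2 sqr_sqrtr //; lra.
have r1 : 1 <= r by apply: sqrtD1_ge1; lra.
have lnr : ln (q + 1) <= 2 * (r - 1).
  have := @le_ln1Dx R (r - 1); rewrite (_ : 1 + (r - 1) = r) ?ln_sqrt; lra.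
rewrite /qlog mulrA ler_pdivlMr //.
have : r * ln (q + 1) <= r * (2 * (r - 1)) by rewrite ler_pM2l //; lra.
nra.
Qed.

(* Below x = ln(q+1)/(2q) use (1+x)^q <= e^(qx) <= 1 + qx e^(qx) with
   e^(qx) <= sqrt(q+1); above it 1 + x <= (2 qlog q + 1) x. *)
Lemma powR1D_le q x : 1 <= q -> 0 <= x ->
  (1 + x) `^ q <=
  1 + q * Num.sqrt (q + 1) * x + ((2 * qlog q + 1) * x) `^ q.
Proof.
move=> q1 x0; have l0 := ln1D_gt0 (lt_le_trans ltr01 q1).
set r := Num.sqrt (q + 1).
have r1 : 1 <= r by apply: sqrtD1_ge1; lra.
have pw0 := powR_ge0 ((2 * qlog q + 1) * x) q.
have lin0 : 0 <= q * r * x by apply: mulr_ge0 => //; apply: mulr_ge0; lra.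
have [xd|dx] := leP x (ln (q + 1) / (2 * q)).
- have xq0 : 0 <= x * q by apply: mulr_ge0; lra.
  have pow_le_exp : (1 + x) `^ q <= expR (x * q).
    by rewrite expRM; apply: ler_wpowR; [lra|exact: expR_ge1Dx|lra].
  have exp_le_r : expR (x * q) <= r.
    rewrite -[r]lnK ?posrE ?sqrtr_gt0; last lra.
    rewrite ler_expR ln_sqrt; last lra.
    move: xd; rewrite ler_pdivlMr; last lra.
    move=> h; rewrite ler_pdivlMr; lra.
  have exp_le := expR_le1DmulexpR xq0.
  have : x * q * expR (x * q) <= x * q * r by exact: ler_wpM2l.
  have -> : q * r * x = x * q * r by ring.
  lra.
- have Kx_ge1 : 1 <= 2 * qlog q * x.
    move: dx; rewrite ltr_pdivrMr; last lra.
    rewrite /qlog => h.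
    have -> : 2 * (q / ln (q + 1)) * x = (2 * q * x) / ln (q + 1) by field; lra.
    rewrite ler_pdivlMr //; lra.
  have : (1 + x) `^ q <= ((2 * qlog q + 1) * x) `^ q by apply: ler_wpowR; lra.
  lra.
Qed.

(* A + B + M^q <= (4 2^q + 3 (2 2^q + 8) + 1) M^q <= 35 2^q M^q <= (70 M)^q. *)
Lemma moment_budget_le q M A B c1 c2 C : 1 <= q -> 0 < M ->
  0 <= A -> 0 <= B -> c1 <= C -> c2 <= C -> 1 <= C ->
  A <= 2 `^ (q + 2) * M `^ q -> B <= 3 * (2 `^ (q + 1) + 8) * M `^ q ->
  c1 * A + c2 * B + M `^ q <= C * (70 * M) `^ q.
Proof.
move=> q1 M0 A0 B0 c1C c2C C1 hA hB.
have Mq0 : 0 < M `^ q by exact: powR_gt0.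
have two_pow k : 2 `^ (q + k%:R) = 2 `^ q * 2 ^+ k.
  by rewrite powRD ?powR_mulrn //; apply/implyP => _; rewrite pnatr_eq0.
have P2 : 2 <= 2 `^ q by apply: le1r_powR; lra.
have F35 : 35 <= 35 `^ q by apply: le1r_powR; lra.
move: hA hB; rewrite (two_pow 2) (two_pow 1) !expr2 expr1 => hA hB.
have : c1 * A + c2 * B + M `^ q <= C * (A + B + M `^ q).
  have : c1 * A <= C * A by exact: ler_wpM2r.
  have : c2 * B <= C * B by exact: ler_wpM2r.
  have : M `^ q <= C * M `^ q by rewrite ler_peMl //; lra.
  lra.
move/le_trans; apply; apply: ler_wpM2l; first lra.
rewrite (_ : 70 * M = 35 * 2 * M); last by ring.
rewrite !powRM ?mulr_ge0 //; try lra.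
have : A + B + M `^ q <= 35 * 2 `^ q * M `^ q by nra.
move/le_trans; apply; apply: ler_wpM2r; first exact: powR_ge0.
by apply: ler_wpM2r; first exact: powR_ge0.
Qed.

End RealInequalities.

Section PowerSums.
Variable R : realType.
Implicit Types x y q : R.

Lemma powR_prod (I : Type) (s : seq I) (P : pred I) (F : I -> R) q :
  (forall j, 0 <= F j) ->
  (\prod_(j <- s | P j) F j) `^ q = \prod_(j <- s | P j) F j `^ q.
Proof.
move=> F0; elim: s => [|a s IH]; first by rewrite !big_nil powR1.
by rewrite !big_cons; case: (P a); rewrite // powRM ?IH //; exact: prodr_ge0.
Qed.

Lemma ler_1Dsum_prod1D (I : Type) (s : seq I) (P : pred I) (F : I -> R) :
  (forall j, 0 <= F j) ->
  1 + \sum_(j <- s | P j) F j <= \prod_(j <- s | P j) (1 + F j).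
Proof.
move=> F0; elim: s => [|a s IH]; first by rewrite !big_nil addr0.
rewrite !big_cons; case: (P a) => //.
have S0 : 0 <= \sum_(j <- s | P j) F j by exact: sumr_ge0.
have Fa := F0 a.
apply: (@le_trans _ _ ((1 + F a) * (1 + \sum_(j <- s | P j) F j))); first nra.
by apply: ler_wpM2l => //; lra.
Qed.

Lemma powR_sum3_le a b c q : 0 <= a -> 0 <= b -> 0 <= c -> 0 <= q ->
  (a + b + c) `^ q <= 3 `^ q * (a `^ q + b `^ q + c `^ q).
Proof.
move=> a0 b0 c0 q0.
have pa := powR_ge0 a q; have pb := powR_ge0 b q; have pc := powR_ge0 c q.
suff [z z0 [sum_le pow_le]] : exists2 z, 0 <= z &
    a + b + c <= 3 * z /\ z `^ q <= a `^ q + b `^ q + c `^ q.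
  apply: (le_trans (ler_wpowR _ sum_le q0)); first lra.
  by rewrite powRM //; apply: ler_wpM2l => //; exact: powR_ge0.
have [ab|ba] := leP a b; have [bc|cb] := leP b c; have [ac|ca] := leP a c.
all: first [exists c => //; lra | exists b => //; lra | exists a => //; lra].
Qed.

Lemma powRKV z q : 0 <= z -> 0 < q -> (z `^ q) `^ q^-1 = z.
Proof. by move=> z0 q0; rewrite -powRrM mulfV ?powRr1 //; lra. Qed.

Lemma powRVK w q : 0 <= w -> 0 < q -> (w `^ q^-1) `^ q = w.
Proof. by move=> w0 q0; rewrite -powRrM mulVf ?powRr1 //; lra. Qed.

Lemma powRV_le_affine y A q : 1 <= q -> 0 <= y -> 0 < A ->
  y `^ q^-1 <= A `^ q^-1 * (1 + y / A).
Proof.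
move=> q1 y0 A0; have qV0 : 0 <= q^-1 by rewrite invr_ge0; lra.
have pA := powR_gt0 q^-1 A0.
have yA0 : 0 <= y / A by apply: divr_ge0; lra.
rewrite {1}(_ : y = A * (y / A)); last by rewrite mulrC divfK // gt_eqF.
rewrite powRM; [apply: ler_wpM2l|lra|lra]; first lra.
have [yA|yA] := leP (y / A) 1.
  by apply: (@le_trans _ _ 1); [have := ler_wpowR yA0 yA qV0; rewrite powR1|lra].
apply: (@le_trans _ _ (y / A)); last lra.
by apply: ler1_powR; [lra|rewrite invf_le1; lra].
Qed.

End PowerSums.

Section ProbabilityIntegrals.
Variables (R : realType) (d : measure_display) (T : measurableType d)
  (P : probability T R).

Lemma probability_fineK (E : set T) : measurable E -> (fine (P E))%:E = P E.
Proof. by move=> mE; rewrite fineK // fin_num_measure. Qed.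

Lemma integral_one : (\int[P]_x (1%:E : \bar R) = 1)%E.
Proof.
rewrite (_ : (fun=> _) = cst 1%E) // integral_cst //.
by rewrite [X in (_ * X)%E]probability_setT mule1.
Qed.

Lemma integral_bounded_fineK (f : T -> R) (B : R) : measurable_fun setT f ->
  (forall x, 0 <= f x) -> (forall x, f x <= B) ->
  (\int[P]_x (f x)%:E = (fine (\int[P]_x (f x)%:E))%:E)%E.
Proof.
move=> mf f0 fB; rewrite fineK // ge0_fin_numE; last first.
  by apply: integral_ge0 => x _; rewrite lee_fin.
apply: (@le_lt_trans _ _ (\int[P]_x (cst B%:E) x)%E).
  apply: ge0_le_integral => //; first by move=> x _; rewrite lee_fin.
  - exact/measurable_EFinP.
  - by move=> x _; rewrite lee_fin.
by rewrite integral_cst // [X in (_ * X)%E]probability_setT mule1 ltry.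
Qed.

Lemma integral_sum_indic (I : finType) (w : I -> R) (E : I -> set T) :
  (forall k, 0 <= w k) -> (forall k, measurable (E k)) ->
  (\int[P]_x (\sum_k w k * \1_(E k) x)%:E = (\sum_k w k * fine (P (E k)))%:E)%E.
Proof.
move=> w0 mE; under eq_integral do rewrite -sumEFin.
rewrite ge0_integral_sum //; last first.
- by move=> k x _; rewrite lee_fin mulr_ge0 // indicE.
- move=> k; apply/measurable_EFinP.
  exact: measurable_funM (measurable_cst _) (measurable_indic (mE k)).
rewrite -sumEFin; apply: eq_bigr => k _.
under eq_integral do rewrite EFinM.
rewrite ge0_integralZl_EFin //; last exact/measurable_EFinP/measurable_indic.
by rewrite integral_indic // setIT EFinM probability_fineK.
Qed.

Lemma integral_affine (f g : T -> R) (C a b : R) :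
  measurable_fun setT f -> measurable_fun setT g ->
  (forall x, 0 <= f x) -> (forall x, 0 <= g x) ->
  0 <= C -> 0 <= a -> 0 <= b ->
  (\int[P]_x (C * (1 + a * f x + b * g x))%:E =
   C%:E * (1 + a%:E * \int[P]_x (f x)%:E + b%:E * \int[P]_x (g x)%:E))%E.
Proof.
move=> mf mg f0 g0 C0 a0 b0.
have maf : measurable_fun setT (fun x => a * f x) by exact: measurable_funM.
have mbg : measurable_fun setT (fun x => b * g x) by exact: measurable_funM.
have m1af : measurable_fun setT (fun x => 1 + a * f x) by exact: measurable_funD.
have af0 x : 0 <= a * f x by rewrite mulr_ge0.
have bg0 x : 0 <= b * g x by rewrite mulr_ge0.
under eq_integral do rewrite EFinM.
rewrite ge0_integralZl_EFin //; first last.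
- exact/measurable_EFinP/measurable_funD.
- by move=> x _; rewrite lee_fin !addr_ge0.
congr (_ * _)%E.
under eq_integral do rewrite !EFinD.
rewrite ge0_integralD //; first last.
- exact/measurable_EFinP.
- by move=> x _; rewrite lee_fin.
- exact/measurable_EFinP.
- by move=> x _; rewrite -EFinD lee_fin addr_ge0.
rewrite ge0_integralD //; first last.
- exact/measurable_EFinP.
- by move=> x _; rewrite lee_fin.
rewrite integral_one; congr (_ + _ + _)%E.
- under eq_integral do rewrite EFinM.
  by rewrite ge0_integralZl_EFin //; [move=> x _; rewrite lee_fin|exact/measurable_EFinP].
- under eq_integral do rewrite EFinM.
  by rewrite ge0_integralZl_EFin //; [move=> x _; rewrite lee_fin|exact/measurable_EFinP].
Qed.

Lemma integral_powRV_le (Y : T -> R) (Z q : R) : 1 <= q -> 0 < Z ->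
  measurable_fun setT Y -> (forall x, 0 <= Y x) ->
  (\int[P]_x (Y x)%:E <= (Z `^ q)%:E)%E ->
  (\int[P]_x (Y x `^ q^-1)%:E <= (2 * Z)%:E)%E.
Proof.
move=> q1 Z0 mY Y0 EY_le; have Zq0 := powR_gt0 q Z0.
have EY0 : (0 <= \int[P]_x (Y x)%:E)%E by apply: integral_ge0 => x _; rewrite lee_fin.
have EYE : (\int[P]_x (Y x)%:E = (fine (\int[P]_x (Y x)%:E))%:E)%E.
  by rewrite fineK // ge0_fin_numE // (le_lt_trans EY_le) ?ltry.
apply: (@le_trans _ _ (\int[P]_x (Z * (1 + (Z `^ q)^-1 * Y x + 0 * Y x))%:E)%E).
  apply: ge0_le_integral => //.
  - by move=> x _; rewrite lee_fin powR_ge0.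
  - exact/measurable_EFinP/(measurableT_comp (measurable_powR _)).
  - apply/measurable_EFinP/measurable_funM; first exact: measurable_cst.
    apply: measurable_funD; last exact: measurable_funM.
    by apply: measurable_funD; [exact: measurable_cst|exact: measurable_funM].
  move=> x _; rewrite lee_fin mul0r addr0 (mulrC (Z `^ q)^-1).
  by have := powRV_le_affine q1 (Y0 x) Zq0; rewrite powRKV //; lra.
rewrite integral_affine ?invr_ge0 ?(ltW Z0) ?(ltW Zq0) //.
move: EY_le; rewrite EYE lee_fin; set y := fine _ => EY_le.
rewrite -[X in (X <= _)%E](_ : (Z * (1 + (Z `^ q)^-1 * y + 0 * y))%:E = _); last first.
  by rewrite EFinM !EFinD !EFinM.
have : (Z `^ q)^-1 * y <= 1 by rewrite mulrC ler_pdivrMr // mul1r.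
by rewrite lee_fin mul0r addr0 [2 * Z]mulrC => ?; apply: ler_wpM2l; lra.
Qed.

End ProbabilityIntegrals.

Section Truncation.
Variable R : realType.

Lemma trunc_ge0 (M y : R) : 0 <= y -> 0 <= trunc M y.
Proof. by move=> y0; rewrite /trunc; case: ifP. Qed.

Lemma trunc_le (M y : R) : 0 <= M -> trunc M y <= M.
Proof. by move=> M0; rewrite /trunc; case: ifP. Qed.

Lemma measurable_trunc (M : R) : measurable_fun setT (trunc M).
Proof.
apply: measurable_fun_ifT; last exact: measurable_cst.
  by apply: measurable_fun_ler; [exact: measurable_id|exact: measurable_cst].
exact: measurable_id.
Qed.

End Truncation.

Section Machines.
Variables (R : realType) (d : measure_display) (T : measurableType d)
  (P : probability T R) (m n : nat) (X : 'I_m -> 'I_n -> T -> R)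
  (asg : 'I_n -> 'I_m) (q M : R).
Hypotheses (mX : forall i j, measurable_fun setT (X i j))
  (X0 : forall i j x, 0 <= X i j x) (indepX : jobs_independent P X)
  (q1 : 1 <= q) (M0 : 0 < M).

Let q0 : 0 < q. Proof. exact: lt_le_trans ltr01 q1. Qed.

Definition Xt i j x := trunc M (X i j x).

Lemma Xt_ge0 i j x : 0 <= Xt i j x.
Proof. exact: trunc_ge0. Qed.

Lemma Xt_le i j x : Xt i j x <= M.
Proof. exact: trunc_le (ltW M0). Qed.

Lemma measurable_Xt i j : measurable_fun setT (Xt i j).
Proof. exact: measurableT_comp (measurable_trunc M) (mX i j). Qed.

Lemma measurable_Xtq i j : measurable_fun setT (fun x => Xt i j x `^ q).
Proof. exact: measurableT_comp (measurable_powR q) (measurable_Xt i j). Qed.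

Definition EXt i j := fine (\int[P]_x (Xt i j x)%:E).
Definition EXtq i j := fine (\int[P]_x (Xt i j x `^ q)%:E).

Lemma integral_Xt i j : (\int[P]_x (Xt i j x)%:E = (EXt i j)%:E)%E.
Proof.
apply: (integral_bounded_fineK P (B := M)).
- exact: measurable_Xt.
- exact: Xt_ge0.
- exact: Xt_le.
Qed.

Lemma integral_Xtq i j : (\int[P]_x (Xt i j x `^ q)%:E = (EXtq i j)%:E)%E.
Proof.
apply: (integral_bounded_fineK P (B := M `^ q)); first exact: measurable_Xtq.
  by move=> x; exact: powR_ge0.
by move=> x; apply: ler_wpowR; [exact: Xt_ge0|exact: Xt_le|exact: ltW q0].
Qed.

Lemma EXt_ge0 i j : 0 <= EXt i j.
Proof. by apply/fine_ge0/integral_ge0 => x _; rewrite lee_fin Xt_ge0. Qed.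

Lemma EXtq_ge0 i j : 0 <= EXtq i j.
Proof. by apply/fine_ge0/integral_ge0 => x _; rewrite lee_fin powR_ge0. Qed.

Definition load i x := \sum_(j < n | asg j == i) Xt i j x.

Lemma measurable_load i : measurable_fun setT (load i).
Proof.
rewrite (_ : load i = fun x => \sum_j if asg j == i then Xt i j x else 0).
  by apply: measurable_sum => j; case: (asg j == i);
    [exact: measurable_Xt|exact: measurable_cst].
by apply: funext => x; rewrite /load big_mkcond.
Qed.

Section RoundedMoment.
Variables (i : 'I_m) (t : R).
Hypothesis t0 : 0 < t.

Definition step := t / n.+1%:R.
Definition nlevels := (Num.Def.archi_bound (M / step)).+1.

Lemma step_gt0 : 0 < step.
Proof. by apply: divr_gt0 => //; rewrite ltr0n. Qed.

Definition level_set (l : nat) : set R :=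
  [set y | l%:R * step - step < trunc M y <= l%:R * step].

(* Jobs not assigned to i are kept as trivial factors (the whole space, of
   weight 1 at level 0), so that products range over all jobs and every
   event is a rectangle as in [jobs_independent]. *)
Definition level_rect (l : 'I_nlevels) (i' : 'I_m) (j : 'I_n) : set R :=
  if (asg j == i) && (i' == i) then level_set l else setT.

Lemma measurable_level_rect l i' j : measurable (level_rect l i' j).
Proof.
rewrite /level_rect; case: ifP => _; last exact: measurableT.
rewrite (_ : level_set l = trunc M @^-1` [set` `]l%:R * step - step, l%:R * step]%R]).
  have := measurable_trunc M measurableT
    (measurable_itv `]l%:R * step - step, l%:R * step]%R).
  by rewrite setTI.
by apply/seteqP; split => y /=; rewrite in_itv.
Qed.

Definition level_event (j : 'I_n) (l : 'I_nlevels) : set T :=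
  \bigcap_(i' in [set: 'I_m]) (X i' j @^-1` level_rect l i' j).

Lemma measurable_level_event j l : measurable (level_event j l).
Proof.
apply: fin_bigcap_measurable => [|i' _]; first exact: finite_finset.
by have := mX i' j measurableT (measurable_level_rect l i' j); rewrite setTI.
Qed.

Lemma level_eventE j l x : asg j == i ->
  (x \in level_event j l) = (l%:R * step - step < Xt i j x <= l%:R * step).
Proof.
move=> ji; apply/idP/idP; rewrite inE.
  by move=> /(_ i I); rewrite /level_rect ji eqxx.
by move=> hx i' _; rewrite /level_rect ji /=; case: eqP => [->|//].
Qed.

Lemma level_event_out j l : asg j != i -> level_event j l = setT.
Proof.
by move=> ji; apply/seteqP; split => x //= _ i' _; rewrite /level_rect (negbTE ji).
Qed.

Lemma level_exists y : 0 <= y -> y <= M ->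
  exists l : 'I_nlevels, l%:R * step - step < y <= l%:R * step.
Proof.
move=> y0 yM; have s0 := step_gt0.
have top : y <= (Num.Def.archi_bound (M / step))%:R * step.
  have := @archi_boundP R (M / step) (ltW (divr_gt0 M0 s0)).
  rewrite ltr_pdivrMr //; lra.
have exk : exists k, y <= k%:R * step by exists (Num.Def.archi_bound (M / step)).
have [k yk kmin] := find_ex_minn exk.
exists (Ordinal (kmin _ top : (k < nlevels)%N)) => /=; rewrite yk andbT.
case: k yk kmin {top} => [|k] yk kmin; first by rewrite mul0r; lra.
have : ~~ (y <= k%:R * step) by apply/negP => /kmin; rewrite ltnn.
by rewrite -ltNge -natr1 mulrDl mul1r; lra.
Qed.

Lemma level_event_uniq j l l' x : asg j == i ->
  x \in level_event j l -> x \in level_event j l' -> l = l'.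
Proof.
move=> ji; rewrite !level_eventE // => /andP[l1 l2] /andP[l'1 l'2].
have s0 := step_gt0; apply: val_inj => /=.
case: (ltngtP l l') => // [ll'|l'l]; exfalso.
- have : l%:R + 1 <= l'%:R :> R by rewrite natr1 ler_nat.
  move=> H; have : l%:R * step + step <= l'%:R * step by nra.
  lra.
- have : l'%:R + 1 <= l%:R :> R by rewrite natr1 ler_nat.
  move=> H; have : l'%:R * step + step <= l%:R * step by nra.
  lra.
Qed.

Definition level_weight (j : 'I_n) (l : 'I_nlevels) : R :=
  if asg j == i then (1 + l%:R * step / t) `^ q else (l == 0 :> nat)%:R.

Lemma level_weight_ge0 j l : 0 <= level_weight j l.
Proof. by rewrite /level_weight; case: ifP => _; [exact: powR_ge0|exact: ler0n]. Qed.

(* (1 + Xt i j / t)^q rounded up to the grid of mesh [step]. *)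
Definition rounded (j : 'I_n) (x : T) : R :=
  \sum_(l < nlevels) level_weight j l * \1_(level_event j l) x.

Lemma measurable_rounded j : measurable_fun setT (rounded j).
Proof.
apply: measurable_sum => l; apply: measurable_funM; first exact: measurable_cst.
exact: measurable_indic (measurable_level_event j l).
Qed.

Lemma rounded_out j x : asg j != i -> rounded j x = 1.
Proof.
move=> ji; rewrite /rounded big_ord_recl /level_weight (negbTE ji) /=.
rewrite level_event_out // indicE in_setT mulr1 big1 ?addr0 // => l _.
by rewrite mul0r.
Qed.

Lemma roundedE j x (l : 'I_nlevels) : asg j == i -> x \in level_event j l ->
  rounded j x = (1 + l%:R * step / t) `^ q.
Proof.
move=> ji xl; rewrite /rounded (bigD1 l) //= indicE xl mulr1 big1 ?addr0.
  by rewrite /level_weight ji.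
move=> l' l'l; rewrite indicE; case: (boolP (x \in _)) => [xl'|]; last by rewrite mulr0.
by move: l'l; rewrite (level_event_uniq ji xl' xl) eqxx.
Qed.

Lemma rounded_ge j x : asg j == i -> (1 + Xt i j x / t) `^ q <= rounded j x.
Proof.
move=> ji; have [l /andP[l1 l2]] := level_exists (Xt_ge0 i j x) (Xt_le i j x).
rewrite (@roundedE j x l) ?level_eventE ?l1 ?l2 //.
have ht := t0; have hq := q0; have y0 := Xt_ge0 i j x.
apply: ler_wpowR; [|rewrite lerD2l ler_pM2r ?invr_gt0 //|lra].
by apply: addr_ge0 => //; apply: divr_ge0 => //; lra.
Qed.

Lemma rounded_le j x : asg j == i ->
  rounded j x <= (1 + step / t) `^ q *
    (1 + q * Num.sqrt (q + 1) * (Xt i j x / t)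
       + ((2 * qlog q + 1) * (Xt i j x / t)) `^ q).
Proof.
move=> ji; have [l /andP[l1 l2]] := level_exists (Xt_ge0 i j x) (Xt_le i j x).
rewrite (@roundedE j x l) ?level_eventE ?l1 ?l2 //.
have ht := t0; have hq := q0; have s0 := step_gt0; have y0 := Xt_ge0 i j x.
have yt0 : 0 <= Xt i j x / t by apply: divr_ge0 => //; lra.
have st0 : 0 <= step / t by apply: divr_ge0; lra.
apply: (@le_trans _ _ (((1 + step / t) * (1 + Xt i j x / t)) `^ q)).
  apply: ler_wpowR; [| |lra].
  - have ls0 : 0 <= l%:R * step by apply: mulr_ge0 => //; lra.
    by apply: addr_ge0 => //; apply: divr_ge0 => //; lra.
  - have : l%:R * step / t <= (Xt i j x + step) / t.
      by rewrite ler_pM2r ?invr_gt0 //; lra.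
    rewrite mulrDl => H; nra.
rewrite powRM; [|lra|lra].
by apply: ler_wpM2l; [exact: powR_ge0|exact: powR1D_le].
Qed.

Definition job_exponent j :=
  q * Num.sqrt (q + 1) / t * EXt i j + ((2 * qlog q + 1) / t) `^ q * EXtq i j.

Definition job_mass j := \sum_(l < nlevels) level_weight j l * fine (P (level_event j l)).

Lemma job_mass_out j : asg j != i -> job_mass j = 1.
Proof.
move=> ji; rewrite /job_mass big_ord_recl /level_weight (negbTE ji) /= mul1r.
rewrite big1 ?addr0 => [|l _]; last by rewrite mul0r.
by rewrite level_event_out // probability_setT.
Qed.

Lemma job_mass_le j : asg j == i ->
  job_mass j <= expR (q * step / t + job_exponent j).
Proof.
move=> ji; have ht := t0; have hq := q0; have s0 := step_gt0.
have r1 := sqrtD1_ge1 (ltW hq).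
set C := (1 + step / t) `^ q.
set a := q * Num.sqrt (q + 1) / t.
set b := ((2 * qlog q + 1) / t) `^ q.
have a0 : 0 <= a by apply: divr_ge0; [apply: mulr_ge0|]; lra.
have b0 : 0 <= b by exact: powR_ge0.
have mass_le : job_mass j <= C * (1 + a * EXt i j + b * EXtq i j).
  rewrite -lee_fin /job_mass -integral_sum_indic; first last.
  - exact: measurable_level_event.
  - exact: level_weight_ge0.
  apply: (@le_trans _ _ (\int[P]_x (C * (1 + a * Xt i j x + b * Xt i j x `^ q))%:E)%E).
    apply: ge0_le_integral => //.
    - by move=> x _; rewrite lee_fin; apply: sumr_ge0 => l _;
        rewrite mulr_ge0 ?level_weight_ge0 // indicE.
    - exact/measurable_EFinP/measurable_rounded.
    - apply/measurable_EFinP/measurable_funM; first exact: measurable_cst.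
      apply: measurable_funD; last exact: measurable_funM (measurable_Xtq i j).
      exact: measurable_funD (measurable_funM _ (measurable_Xt i j)).
    move=> x _; rewrite lee_fin; apply: (le_trans (rounded_le x ji)).
    have y0 := Xt_ge0 i j x.
    rewrite ler_wpM2l ?powR_ge0 // lerD ?lerD2l //.
      by rewrite /a mulrA mulrAC.
    have hK := qlog_ge1 q1.
    rewrite /b -powRM //; last by apply: divr_ge0; lra.
    by rewrite mulrA mulrAC.
  have x0 x : 0 <= Xt i j x `^ q by exact: powR_ge0.
  rewrite (integral_affine P (measurable_Xt i j) (measurable_Xtq i j) (Xt_ge0 i j) x0)
    ?powR_ge0 //.
  by rewrite integral_Xt integral_Xtq !EFinM !EFinD.
apply: (le_trans mass_le); rewrite expRD; apply: ler_pM.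
- exact: powR_ge0.
- by rewrite !addr_ge0 // mulr_ge0 ?EXt_ge0 ?EXtq_ge0.
- rewrite (_ : q * step / t = step / t * q); last by ring.
  by rewrite expRM; apply: ler_wpowR; [apply: addr_ge0 => //; apply: divr_ge0; lra
    |exact: expR_ge1Dx|lra].
- by rewrite -addrA; exact: expR_ge1Dx.
Qed.

Lemma prod_indic (F : 'I_n -> set T) x :
  \prod_j \1_(F j) x = \1_(\bigcap_(j in [set: 'I_n]) F j) x :> R.
Proof.
have [allF|/existsNP[j Fj]] := pselect (forall j, F j x).
  by rewrite big1 => [|j _]; rewrite indicE mem_set.
rewrite (bigD1 j) //= indicE memNset // mul0r indicE memNset //.
by move=> /(_ j I).
Qed.

(* Expanding the product over jobs of sums over levels gives a sum over
   level profiles f; each profile event is a rectangle, so independence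
   factorizes its probability. *)
Lemma integral_prod_rounded :
  (\int[P]_x (\prod_j rounded j x)%:E = (\prod_j job_mass j)%:E)%E.
Proof.
pose E (f : {ffun 'I_n -> 'I_nlevels}) := \bigcap_(j in [set: 'I_n]) level_event j (f j).
have mE f : measurable (E f).
  apply: fin_bigcap_measurable => [|j _]; first exact: finite_finset.
  exact: measurable_level_event.
have PE f : fine (P (E f)) = \prod_j fine (P (level_event j (f j))).
  have mrect i' j : measurable (level_rect (f j) i' j) by exact: measurable_level_rect.
  rewrite /E /level_event (indepX mrect).
  rewrite (eq_bigr (fun j => (fine (P (level_event j (f j))))%:E)) ?prodEFin //.
  by move=> j _; rewrite probability_fineK //; exact: measurable_level_event.
have expand x : \prod_j rounded j x =
    \sum_(f : {ffun 'I_n -> 'I_nlevels}) (\prod_j level_weight j (f j)) * \1_(E f) x.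
  rewrite /rounded bigA_distr_bigA; apply: eq_bigr => f _.
  by rewrite big_split /= prod_indic.
under eq_integral do rewrite expand.
rewrite integral_sum_indic //; last by move=> f; apply: prodr_ge0 => j _; exact: level_weight_ge0.
congr (_%:E); rewrite /job_mass bigA_distr_bigA; apply: eq_bigr => f _.
by rewrite PE -big_split.
Qed.

Lemma load_pow_le_prod x : load i x `^ q <= t `^ q * \prod_j rounded j x.
Proof.
have ht := t0; have hq := q0.
pose F j := if asg j == i then Xt i j x / t else 0.
have F0 j : 0 <= F j.
  by rewrite /F; case: ifP => _ //; apply: divr_ge0; [exact: Xt_ge0|lra].
have loadE : load i x = t * \sum_j F j.
  rewrite /load big_mkcond mulr_sumr; apply: eq_bigr => j _; rewrite /F.
  by case: ifP => _; [rewrite mulrC divfK // gt_eqF|rewrite mulr0].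
have SF0 : 0 <= \sum_j F j by exact: sumr_ge0.
rewrite loadE; apply: (@le_trans _ _ ((t * (1 + \sum_j F j)) `^ q)).
  by apply: ler_wpowR; [apply: mulr_ge0|apply: ler_wpM2l|]; lra.
rewrite powRM; [apply: ler_wpM2l; first exact: powR_ge0|lra|lra].
apply: (@le_trans _ _ ((\prod_j (1 + F j)) `^ q)).
  by apply: ler_wpowR; [lra|exact: ler_1Dsum_prod1D|lra].
rewrite powR_prod => [|j]; last by have := F0 j; lra.
apply: ler_prod => j _; rewrite powR_ge0 /= /F; case: ifP => ji.
  exact: rounded_ge.
by rewrite addr0 powR1 rounded_out // ji.
Qed.

(* The rounding costs at most (1 + step/t)^q <= exp(q step/t) per job, and
   there are at most n < n + 1 = t/step jobs. *)
Lemma integral_load_pow_le :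
  (\int[P]_x (load i x `^ q)%:E <=
   (t `^ q * expR (q + \sum_(j < n | asg j == i) job_exponent j))%:E)%E.
Proof.
have ht := t0; have hq := q0; have s0 := step_gt0.
apply: (@le_trans _ _ (\int[P]_x (t `^ q * \prod_j rounded j x)%:E)%E).
  apply: ge0_le_integral => //.
  - by move=> x _; rewrite lee_fin powR_ge0.
  - exact/measurable_EFinP/(measurableT_comp (measurable_powR q))/measurable_load.
  - apply/measurable_EFinP/measurable_funM; first exact: measurable_cst.
    by apply: measurable_prod => j _; exact: measurable_rounded.
  - by move=> x _; rewrite lee_fin load_pow_le_prod.
under eq_integral do rewrite EFinM.
rewrite ge0_integralZl_EFin ?powR_ge0 //; first last.
- apply/measurable_EFinP; apply: measurable_prod => j _; exact: measurable_rounded.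
- by move=> x _; rewrite lee_fin prodr_ge0 // => j _; rewrite sumr_ge0 // => l _;
    rewrite mulr_ge0 ?level_weight_ge0 // indicE.
rewrite integral_prod_rounded -EFinM lee_fin ler_wpM2l ?powR_ge0 //.
pose e j := if asg j == i then q * step / t + job_exponent j else 0.
apply: (@le_trans _ _ (\prod_j expR (e j))).
  apply: ler_prod => j _; rewrite /e; case: ifP => ji.
    by rewrite sumr_ge0 => [|l _]; [exact: job_mass_le|rewrite mulr_ge0 ?level_weight_ge0 ?fine_ge0].
  by rewrite job_mass_out ?ji // expR0 ler01 lexx.
rewrite -expR_sum ler_expR /e -big_mkcond /= big_split /= lerD2r.
apply: (@le_trans _ _ (\sum_(j < n) q * step / t)).
  by rewrite [leRHS](bigID (fun j => asg j == i)) /= lerDl sumr_ge0 // => j _;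
    rewrite divr_ge0 ?mulr_ge0 //; lra.
rewrite sumr_const card_ord /step.
rewrite (_ : q * (t / n.+1%:R) / t = q / n.+1%:R); last first.
  by field; rewrite addrC natr1 pnatr_eq0 (gt_eqF ht).
by rewrite -[_ *+ n]mulr_natr mulrAC ler_pdivrMr ?ltr0n // ler_pM2l // ler_nat leqnSn.
Qed.

End RoundedMoment.

Definition mean_load i := \sum_(j < n | asg j == i) EXt i j.
Definition qmoment_load i := \sum_(j < n | asg j == i) EXtq i j.

Lemma mean_load_ge0 i : 0 <= mean_load i.
Proof. by apply: sumr_ge0 => j _; exact: EXt_ge0. Qed.

Lemma qmoment_load_ge0 i : 0 <= qmoment_load i.
Proof. by apply: sumr_ge0 => j _; exact: EXtq_ge0. Qed.

(* The scale t = sqrt(q+1) mean + (2 qlog q + 1) qmoment^(1/q) + eta makes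
   the linear part of the job exponents at most q and the power part at
   most 1. *)
Lemma integral_load_pow_le_moments i eta : 0 < eta ->
  (\int[P]_x (load i x `^ q)%:E <=
   (expR (3 * q) * 3 `^ q *
     (Num.sqrt (q + 1) `^ q * mean_load i `^ q
      + (2 * qlog q + 1) `^ q * qmoment_load i + eta `^ q))%:E)%E.
Proof.
move=> eta0; have hq := q1; have hK := qlog_ge1 q1.
set r := Num.sqrt (q + 1); have r1 : 1 <= r by apply: sqrtD1_ge1; lra.
set K := 2 * qlog q + 1; have K0 : 0 <= K by rewrite /K; lra.
set mu := mean_load i; set Q := qmoment_load i.
have mu0 : 0 <= mu by exact: mean_load_ge0.
have Q0 : 0 <= Q by exact: qmoment_load_ge0.
set Qr := Q `^ q^-1; have Qr0 : 0 <= Qr by exact: powR_ge0.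
have rmu0 : 0 <= r * mu by apply: mulr_ge0; lra.
have KQr0 : 0 <= K * Qr by apply: mulr_ge0; lra.
set t := r * mu + K * Qr + eta.
have t0 : 0 < t by rewrite /t; lra.
apply: (le_trans (integral_load_pow_le i t0)); rewrite lee_fin.
have exponentsE : \sum_(j < n | asg j == i) job_exponent i t j =
    q * (r * mu / t) + (K * Qr / t) `^ q.
  rewrite /job_exponent big_split /= -!mulr_sumr -/(mean_load i) -/(qmoment_load i).
  have Kt0 : 0 <= K / t by apply: divr_ge0; lra.
  have KtQ : (K / t) `^ q * Q = (K / t * Qr) `^ q by rewrite [RHS]powRM // /Qr powRVK.
  rewrite -/r -/K -/mu -/Q KtQ.
  by congr (_ + _); [ring|congr (_ `^ _); ring].
have lin_le : r * mu / t <= 1 by rewrite ler_pdivrMr // mul1r /t; lra.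
have pow_le : (K * Qr / t) `^ q <= 1.
  have := @ler_wpowR R (K * Qr / t) 1 q; rewrite powR1; apply.
  - by apply: divr_ge0; lra.
  - by rewrite ler_pdivrMr // mul1r /t; lra.
  - lra.
have : q + \sum_(j < n | asg j == i) job_exponent i t j <= 3 * q.
  rewrite exponentsE; have : q * (r * mu / t) <= q * 1 by rewrite ler_pM2l.
  lra.
rewrite -ler_expR => exp_le.
rewrite -mulrA [t `^ q * _]mulrC; apply: ler_pM; [exact: expR_ge0|exact: powR_ge0|exact: exp_le|].
apply: (le_trans (powR_sum3_le rmu0 KQr0 (ltW eta0) (ltW q0))).
rewrite ler_wpM2l ?powR_ge0 // !powRM //; last lra.
by rewrite /Qr powRVK.
Qed.

Definition load_norm_bound := 630 * expR 3 * qlog q * M.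

Lemma load_norm_boundE : load_norm_bound `^ q =
  expR (3 * q) * 3 `^ q * ((3 * qlog q) `^ q * (70 * M) `^ q).
Proof.
have e0 := expR_ge0 (3 : R); have hM := M0; have K0 : 0 <= 3 * qlog q.
  by have := qlog_ge1 q1; lra.
rewrite /load_norm_bound (_ : _ * M = expR 3 * 3 * (3 * qlog q * (70 * M))); last by ring.
have c0 : 0 <= 70 * M by lra.
have three0 : 0 <= 3 :> R by [].
by rewrite (powRM _ (mulr_ge0 e0 three0) (mulr_ge0 K0 c0)) (powRM _ e0 three0)
  (powRM _ K0 c0) -expRM.
Qed.

(* Each machine gets the slack eta^q = M^q / m, so that the slacks add up
   to M^q. *)
Lemma slack_gt0 (i : 'I_m) : 0 < (M `^ q / m%:R) `^ q^-1.
Proof.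
apply: powR_gt0; apply: divr_gt0; first exact: powR_gt0.
by rewrite ltr0n (leq_ltn_trans (leq0n i) (ltn_ord i)).
Qed.

Lemma integral_sum_load_pow_le :
  \sum_(i < m) mean_load i `^ q <= 2 `^ (q + 2) * M `^ q ->
  \sum_(i < m) qmoment_load i <= 3 * (2 `^ (q + 1) + 8) * M `^ q ->
  (\int[P]_x (\sum_(i < m) load i x `^ q)%:E <= (load_norm_bound `^ q)%:E)%E.
Proof.
move=> mean_le qmoment_le; have hq := q1; have hM := M0; have hK := qlog_ge1 q1.
have r1 : 1 <= Num.sqrt (q + 1) by apply: sqrtD1_ge1; lra.
have r_le := sqrt_le_qlog q1.
under eq_integral do rewrite -sumEFin.
rewrite ge0_integral_sum //; first last.
- by move=> i x _; rewrite lee_fin powR_ge0.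
- by move=> i; apply/measurable_EFinP/(measurableT_comp (measurable_powR q))/measurable_load.
apply: le_trans.
  by apply: lee_sum => i _; exact: integral_load_pow_le_moments (slack_gt0 i).
rewrite sumEFin lee_fin -mulr_sumr !big_split /= -!mulr_sumr.
have slack_sum : \sum_(i < m) ((M `^ q / m%:R) `^ q^-1) `^ q <= M `^ q.
  case: m => [|k]; first by rewrite big_ord0 powR_ge0.
  rewrite (eq_bigr (fun=> M `^ q / k.+1%:R)) => [|i _]; last first.
    by rewrite powRVK //; apply: divr_ge0; [exact: powR_ge0|exact: ler0n].
  by rewrite sumr_const card_ord -[_ *+ _]mulr_natr divfK // pnatr_eq0.
rewrite load_norm_boundE ler_wpM2l ?mulr_ge0 ?expR_ge0 ?powR_ge0 //.
apply: (le_trans _ (moment_budget_le (c1 := Num.sqrt (q + 1) `^ q)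
  (c2 := (2 * qlog q + 1) `^ q) (C := (3 * qlog q) `^ q) q1 M0 _ _ _ _ _ mean_le qmoment_le)).
- by rewrite lerD2l.
- by apply: sumr_ge0 => i _; exact: powR_ge0.
- by apply: sumr_ge0 => i _; exact: qmoment_load_ge0.
- by apply: ler_wpowR; lra.
- by apply: ler_wpowR; lra.
- by apply: (le_trans _ (le1r_powR _ hq)); lra.
Qed.

End Machines.

Theorem mainTheorem15 (R : realType) :
  exists c : R,
  forall (d : measure_display) (T : measurableType d) (P : probability T R)
    (m n : nat) (X : 'I_m -> 'I_n -> T -> R) (asg : 'I_n -> 'I_m) (q M : R),
    (forall i j, measurable_fun setT (X i j)) ->
    (forall i j x, 0 <= X i j x) ->
    jobs_independent P X ->
    1 <= q -> 0 < M ->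
    let alpha := 2 `^ (q + 1) + 8 in
    let X' := fun i j x => trunc M (X i j x) in
    \sum_(i < m) (\sum_(j < n | asg j == i)
        fine (\int[P]_x (X' i j x)%:E)) `^ q <= 2 `^ (q + 2) * M `^ q ->
    \sum_(i < m) \sum_(j < n | asg j == i)
        fine (\int[P]_x ((X' i j x) `^ q)%:E) <= 3 * alpha * M `^ q ->
    (\int[P]_x ((\sum_(i < m) (\sum_(j < n | asg j == i) X' i j x) `^ q)
                  `^ q^-1)%:E
     <= (c * (q / ln (q + 1)) * M)%:E)%E.
Proof.
exists (1260 * expR 3).
move=> d T P m n X asg q M mX X0 indepX q1 M0 alpha X' mean_le qmoment_le.
have bound_gt0 : 0 < load_norm_bound q M.
  have hK := qlog_ge1 q1; have e0 := expR_gt0 (3 : R).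
  rewrite /load_norm_bound; apply: mulr_gt0 => //.
  by apply: mulr_gt0; [apply: mulr_gt0|]; lra.
rewrite (_ : _ * M = 2 * load_norm_bound q M); last by rewrite /load_norm_bound /qlog; ring.
have load_le := integral_sum_load_pow_le mX X0 indepX q1 M0 mean_le qmoment_le.
apply: (integral_powRV_le q1 bound_gt0 _ _ load_le).
- apply: measurable_sum => i.
  exact: measurableT_comp (measurable_powR q) (measurable_load asg M mX i).
- by move=> x; apply: sumr_ge0 => i _; exact: powR_ge0.
Qed.
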